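(* Let $n,m\ge 1$. Let $H,S\in C^\infty(\mathbb{R}^n)$ be real functions (the Hamiltonian and entropy functions), let $J\in\mathbb{R}^{n\times n}$ be a constant skew-symmetric matrix, let $g\in\mathbb{R}^{n\times m}$ be a constant matrix and $\tau\in\mathbb{R}^m$ a constant vector. Let $\gamma$ be a strictly positive real function of $\left(x,\tfrac{\partial H}{\partial x}(x)\right)$ and $\gamma_{\mathrm{port}}$ a strictly positive real function of $\left(x,\tfrac{\partial H}{\partial x}(x),u\right)$, $x\in\mathbb{R}^n$, $u\in\mathbb{R}^m$. Write $\{S,H\}_J(x)=\frac{\partial S}{\partial x}(x)^{\top}J\frac{\partial H}{\partial x}(x)$ and $$B(x,u)=\left(g^{\top}\tfrac{\partial S}{\partial x}(x)\right)^{\top}u-\tau^{\top}\left(g^{\top}\tfrac{\partial H}{\partial x}(x)\right)$$ (this is the bracket $\{S_{\mathrm{tot}},H_{\mathrm{tot}}\}_{J_{\mathrm{port}}}$ of $S_{\mathrm{tot}}(x,\xi)=S(x)+\tau^\top\xi$ and $H_{\mathrm{tot}}(x,\xi)=H(x)+u^\top\xi$ with respect to $J_{\mathrm{port}}=\left(\begin{smallmatrix}0&g\\-g^\top&0\end{smallmatrix}\right)$). Consider the control system $$\frac{dx}{dt}=\gamma\left(x,\tfrac{\partial H}{\partial x}\right)\{S,H\}_J\,J\frac{\partial H}{\partial x}(x)+\gamma_{\mathrm{port}}\left(x,\tfrac{\partial H}{\partial x},u\right)B(x,u)\,g\,u,$$ $$y=\gamma_{\mathrm{port}}\left(x,\tfrac{\partial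 H}{\partial x},u\right)B(x,u)\,g^{\top}\frac{\partial H}{\partial x}(x).$$ Then along every (differentiable) solution $x(t)$ corresponding to an input $u(t)\in\mathbb{R}^m$, with output $y(t)$, one has the energy balance $$\frac{d}{dt}H(x(t))=y(t)^{\top}u(t)$$ and the entropy balance $$\frac{d}{dt}S(x(t))-\tau^{\top}y(t)=\sigma_{int}+\sigma_{port},$$ where $\sigma_{int}=\gamma\left(x,\tfrac{\partial H}{\partial x}\right)\{S,H\}_J^2\ge 0$ and $\sigma_{port}=\gamma_{\mathrm{port}}\left(x,\tfrac{\partial H}{\partial x},u\right)B(x,u)^2\ge 0$.
   Context: This system is called an Irreversible Port Hamiltonian System with irreversible port map. $\sigma_{int}$ is interpreted as the internal irreversible entropy creation and $\sigma_{port}$ as the irreversible entropy creation at the interface (port) of the system. *)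

From HB Require Import structures.
From mathcomp Require Import all_boot all_order all_algebra.
From mathcomp Require Import all_classical all_reals all_analysis.
Set Implicit Arguments. Unset Strict Implicit. Unset Printing Implicit Defensive.
Import Order.TTheory GRing.Theory Num.Theory.
Import numFieldNormedType.Exports.
Local Open Scope ring_scope.

Section Defs.
Variable R : realType.

(* iterated directional derivative along the directions vs (first applied last) *)
Fixpoint iter_dir (n : nat) (vs : seq 'cV[R]_n) (f : 'cV[R]_n -> R) : 'cV[R]_n -> R :=
  match vs with
  | [::] => f
  | v :: vs' => fun x => 'D_v (iter_dir vs' f) x
  end.

(* C^infinity: f and all its iterated directional derivatives are (Frechet)
   differentiable everywhere. *)
Definition smooth (n : nat) (f : 'cV[R]_n -> R) : Prop :=
  forall (vs : seq 'cV[R]_n) (x : 'cV[R]_n), differentiable (iter_dir vs f) x.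

Definition grad (n : nat) (f : 'cV[R]_n -> R) (x : 'cV[R]_n) : 'cV[R]_n :=
  \col_i 'D_(delta_mx i (0 : 'I_1)) f x.

Definition dotv (k : nat) (a b : 'cV[R]_k) : R := (a^T *m b) 0 0.

Definition bracketJ (n : nat) (J : 'M[R]_n) (S H : 'cV[R]_n -> R) (x : 'cV[R]_n) : R :=
  dotv (grad S x) (J *m grad H x).

Definition Bport (n m : nat) (g : 'M[R]_(n, m)) (tau : 'cV[R]_m)
  (S H : 'cV[R]_n -> R) (x : 'cV[R]_n) (u : 'cV[R]_m) : R :=
  dotv (g^T *m grad S x) u - dotv tau (g^T *m grad H x).

End Defs.

(** Both balances are pointwise identities between the derivative of a
    function along the flow, [grad F . dx/dt], and the port variables.  For
    [H] the internal term [grad H . J grad H] vanishes because [J] is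
    skew-symmetric and the port term is [y . u] by adjointness of [g].  For
    [S] each term of the vector field contributes its modulating factor times
    a bracket, and subtracting [tau . y] completes the port bracket [B]; the
    two contributions are [gam {S,H}_J^2] and [gamp B^2], nonnegative since
    [gam] and [gamp] are positive. *)
From HB Require Import structures.
From mathcomp Require Import all_boot all_order all_algebra.
From mathcomp Require Import all_classical all_reals all_analysis.
From mathcomp Require Import ring.
Import Order.TTheory GRing.Theory Num.Theory.
Import numFieldNormedType.Exports.
Local Open Scope ring_scope.

Set Implicit Arguments.
Unset Strict Implicit.

Section Dotv.
Variable R : realType.

Lemma dotvDr (k : nat) (a b c : 'cV[R]_k) : dotv a (b + c) = dotv a b + dotv a c.
Proof. by rewrite /dotv mulmxDr mxE. Qed.

Lemma dotvC (k : nat) (a b : 'cV[R]_k) : dotv a b = dotv b a.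
Proof. by rewrite /dotv -[in RHS](trmxK a) -trmx_mul [RHS]mxE. Qed.

Lemma dotvNl (k : nat) (a b : 'cV[R]_k) : dotv (- a) b = - dotv a b.
Proof. by rewrite /dotv linearN /= mulNmx mxE. Qed.

Lemma dotvZr (k : nat) (s : R) (a b : 'cV[R]_k) : dotv a (s *: b) = s * dotv a b.
Proof. by rewrite /dotv -scalemxAr mxE. Qed.

Lemma dotvZl (k : nat) (s : R) (a b : 'cV[R]_k) : dotv (s *: a) b = s * dotv a b.
Proof. by rewrite /dotv linearZ /= -scalemxAl mxE. Qed.

Lemma dotv_mulmx (k l : nat) (M : 'M[R]_(k, l)) (a : 'cV[R]_k) (b : 'cV[R]_l) :
  dotv a (M *m b) = dotv (M^T *m a) b.
Proof. by rewrite /dotv trmx_mul trmxK mulmxA. Qed.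

Lemma dotv_skew (k : nat) (J : 'M[R]_k) (a : 'cV[R]_k) :
  J^T = - J -> dotv a (J *m a) = 0.
Proof.
move=> skewJ; have selfN : dotv a (J *m a) = - dotv a (J *m a).
  by rewrite [LHS]dotv_mulmx skewJ mulNmx dotvNl dotvC.
have twice0 : dotv a (J *m a) *+ 2 = 0 by rewrite mulr2n {2}selfN subrr.
by move/eqP: twice0; rewrite mulrn_eq0 => /eqP.
Qed.

End Dotv.

Section ChainRule.
Variable R : realType.

Lemma diff_grad (k : nat) (f : 'cV[R]_k -> R) (p v : 'cV[R]_k) :
  differentiable f p -> 'd f p v = dotv (grad f p) v.
Proof.
move=> df; rewrite {1}[v]matrix_sum_delta linear_sum /dotv mxE.
apply: eq_bigr => i _; rewrite big_ord1 linearZ /= -deriveE //.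
by rewrite !mxE mulrC.
Qed.

Lemma is_derive_comp_grad (k : nat) (f : 'cV[R]_k -> R) (x : R -> 'cV[R]_k)
    (t : R) (v : 'cV[R]_k) :
  is_derive t 1 x v -> differentiable f (x t) ->
  is_derive t 1 (f \o x) (dotv (grad f (x t)) v).
Proof.
move=> xv df; have dx : differentiable x t.
  by apply/derivable1_diffP; exact: ex_derive.
have dfx : differentiable (f \o x) t := differentiable_comp dx df.
have dxv : 'd x t 1 = v by rewrite -deriveE //; case: xv.
have -> : dotv (grad f (x t)) v = 'D_1 (f \o x) t.
  by rewrite deriveE // diff_comp //= dxv diff_grad.
by apply: derivableP; exact: diff_derivable.
Qed.

End ChainRule.

Section IrreversiblePortHamiltonian.
Variables (R : realType) (n m : nat).
Variables (H S : 'cV[R]_n -> R) (J : 'M[R]_n) (g : 'M[R]_(n, m)) (tau : 'cV[R]_m).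
Variables (gam : 'cV[R]_n -> 'cV[R]_n -> R) (gamp : 'cV[R]_n -> 'cV[R]_n -> 'cV[R]_m -> R).

Definition iphs_field (x : 'cV[R]_n) (u : 'cV[R]_m) : 'cV[R]_n :=
  (gam x (grad H x) * bracketJ J S H x) *: (J *m grad H x)
  + (gamp x (grad H x) u * Bport g tau S H x u) *: (g *m u).

Definition iphs_output (x : 'cV[R]_n) (u : 'cV[R]_m) : 'cV[R]_m :=
  (gamp x (grad H x) u * Bport g tau S H x u) *: (g^T *m grad H x).

Definition sigma_int (x : 'cV[R]_n) : R := gam x (grad H x) * bracketJ J S H x ^+ 2.

Definition sigma_port (x : 'cV[R]_n) (u : 'cV[R]_m) : R :=
  gamp x (grad H x) u * Bport g tau S H x u ^+ 2.

Lemma iphs_energy_balance (x : 'cV[R]_n) (u : 'cV[R]_m) :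
  J^T = - J -> dotv (grad H x) (iphs_field x u) = dotv (iphs_output x u) u.
Proof.
move=> skewJ; rewrite dotvDr !dotvZr dotv_skew // mulr0 add0r.
by rewrite dotvZl dotv_mulmx.
Qed.

Lemma iphs_entropy_balance (x : 'cV[R]_n) (u : 'cV[R]_m) :
  dotv (grad S x) (iphs_field x u) - dotv tau (iphs_output x u)
  = sigma_int x + sigma_port x u.
Proof.
rewrite dotvDr !dotvZr [dotv (grad S x) (g *m u)]dotv_mulmx.
rewrite /sigma_int /sigma_port /Bport -/(bracketJ J S H x); ring.
Qed.

End IrreversiblePortHamiltonian.

Unset Implicit Arguments.

Theorem mainTheorem1 (R : realType) (n m : nat) (hn : (0 < n)%N) (hm : (0 < m)%N)
  (H S : 'cV[R]_n -> R) (hH : smooth H) (hS : smooth S)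
  (J : 'M[R]_n) (hJ : J^T = - J)
  (g : 'M[R]_(n, m)) (tau : 'cV[R]_m)
  (gam : 'cV[R]_n -> 'cV[R]_n -> R) (hgam : forall x p, 0 < gam x p)
  (gamp : 'cV[R]_n -> 'cV[R]_n -> 'cV[R]_m -> R)
  (hgamp : forall x p v, 0 < gamp x p v)
  (x : R -> 'cV[R]_n) (u : R -> 'cV[R]_m) (y : R -> 'cV[R]_m)
  (hx : forall t : R, is_derive t (1 : R) x
          ((gam (x t) (grad H (x t)) * bracketJ J S H (x t)) *: (J *m grad H (x t))
           + (gamp (x t) (grad H (x t)) (u t) * Bport g tau S H (x t) (u t))
               *: (g *m u t)))
  (hy : forall t : R, y t = (gamp (x t) (grad H (x t)) (u t) * Bport g tau S H (x t) (u t))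
                          *: (g^T *m grad H (x t))) :
  forall t : R,
    let sigma_int := gam (x t) (grad H (x t)) * (bracketJ J S H (x t)) ^+ 2 in
    let sigma_port := gamp (x t) (grad H (x t)) (u t) * (Bport g tau S H (x t) (u t)) ^+ 2 in
    [/\ is_derive t (1 : R) (H \o x) (dotv (y t) (u t)),
        derivable (S \o x) t (1 : R),
        'D_1 (S \o x) t - dotv tau (y t) = sigma_int + sigma_port,
        0 <= sigma_int & 0 <= sigma_port].
Proof.
move=> t; rewrite /= hy.
have field_t : is_derive t 1 x (iphs_field H S J g tau gam gamp (x t) (u t)) := hx t.
have dHx := is_derive_comp_grad field_t (hH [::] (x t)).
have dSx := is_derive_comp_grad field_t (hS [::] (x t)).
rewrite iphs_energy_balance // in dHx.
split.
- exact: dHx.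
- exact: ex_derive.
- by rewrite derive_val iphs_entropy_balance.
- by rewrite mulr_ge0 ?sqr_ge0 ?ltW ?hgam.
- by rewrite mulr_ge0 ?sqr_ge0 ?ltW ?hgamp.
Qed.
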